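(* Let $\alpha\in(0,1)\setminus\mathbb{Q}$. For every integer $n\geq1$, $$\min_{1\leq k\leq n}\operatorname{dist}(k\alpha,\mathbb{Z})\geq\left(2e^nE_n(\alpha)\right)^{-1}.$$
   Context: Let $\Delta^2$ be the closed unit bidisk in $\mathbb{C}^2$, $\mathcal{P}_n$ the space of polynomials $P\in\mathbb{C}[z,w]$ of total degree at most $n$, $K=\{(e^z,e^{\alpha z}):\ |z|\leq1\}$, $\|P\|_A=\sup_A|P|$, and $E_n(\alpha)=\sup\{\|P\|_{\Delta^2}:\ P\in\mathcal{P}_n,\ \|P\|_K\leq1\}$. *)

From Stdlib Require Import Reals Lra Lia ZArith.
Open Scope R_scope.

Definition C := (R * R)%type.
Definition Cre (z : C) : R := fst z.
Definition Cim (z : C) : R := snd z.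
Definition C0 : C := (0, 0).
Definition C1 : C := (1, 0).
Definition Cadd (z w : C) : C := (fst z + fst w, snd z + snd w).
Definition Cmul (z w : C) : C :=
  (fst z * fst w - snd z * snd w, fst z * snd w + snd z * fst w).
Definition Crscal (a : R) (z : C) : C := (a * fst z, a * snd z).
Fixpoint Cpow (z : C) (n : nat) : C :=
  match n with O => C1 | S m => Cmul z (Cpow z m) end.
Definition Cmod (z : C) : R := sqrt (fst z * fst z + snd z * snd z).
Definition Cexp (z : C) : C := (exp (fst z) * cos (snd z), exp (fst z) * sin (snd z)).

Fixpoint Csum (f : nat -> C) (n : nat) : C :=
  match n with O => f O | S m => Cadd (Csum f m) (f (S m)) end.

(* A polynomial of total degree <= n in C[z,w], given by its coefficients
   c i j (coefficients with i + j > n are ignored), evaluated at (z,w):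
   sum_{i <= n} sum_{j <= n - i} c i j z^i w^j. *)
Definition poly_eval2 (n : nat) (c : nat -> nat -> C) (z w : C) : C :=
  Csum (fun i => Csum (fun j => Cmul (c i j) (Cmul (Cpow z i) (Cpow w j))) (n - i)) n.

Definition in_bidisk (z w : C) : Prop := Cmod z <= 1 /\ Cmod w <= 1.

Definition normK_le1 (alpha : R) (n : nat) (c : nat -> nat -> C) : Prop :=
  forall z : C, Cmod z <= 1 ->
    Cmod (poly_eval2 n c (Cexp z) (Cexp (Crscal alpha z))) <= 1.

(* The set whose supremum is E_n(alpha):
   { |P(z,w)| : P in P_n, ||P||_K <= 1, (z,w) in the closed unit bidisk }.
   Its supremum equals sup { ||P||_{Delta^2} : P in P_n, ||P||_K <= 1 }. *)
Definition En_set (alpha : R) (n : nat) (x : R) : Prop :=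
  exists (c : nat -> nat -> C) (z w : C),
    normK_le1 alpha n c /\ in_bidisk z w /\ x = Cmod (poly_eval2 n c z w).

Definition distZ (x : R) : R :=
  Rmin (x - IZR (Int_part x)) (IZR (Int_part x) + 1 - x).

Definition irrational (x : R) : Prop :=
  ~ exists (p q : Z), q <> 0%Z /\ x = IZR p / IZR q.

(* For 1 <= k <= n let p be the integer nearest to k alpha and d = |k alpha - p| = dist(k alpha, Z),
   which is positive since alpha is irrational.  The polynomial P = s (w^k - z^p) has total degree
   <= n, and on K it equals s e^{p z} (e^{(k alpha - p) z} - 1), of modulus at most s e^n 2 d since
   |e^u - 1| <= 2 |u| for |u| <= 1/2.  With s = 1 / (2 e^n d) we get ||P||_K <= 1 while
   |P(1, 0)| = s, so 1 / (2 e^n d) <= E_n(alpha). *)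

From Stdlib Require Import Reals Lra Lia ZArith FunctionalExtensionality.
Open Scope R_scope.

Definition Cnorm2 (z : C) : R := Cre z * Cre z + Cim z * Cim z.

Lemma Cnorm2_ge0 z : 0 <= Cnorm2 z.
Proof. unfold Cnorm2; nra. Qed.

Lemma Cmod_le_1_iff z : Cmod z <= 1 <-> Cnorm2 z <= 1.
Proof.
  pose proof (Cnorm2_ge0 z); change (sqrt (Cnorm2 z) <= 1 <-> Cnorm2 z <= 1); split; intros Hle.
  - apply sqrt_le_0; [lra | lra | rewrite sqrt_1; exact Hle].
  - rewrite <- sqrt_1; apply sqrt_le_1_alt, Hle.
Qed.

Lemma Cnorm2_Cmul z w : Cnorm2 (Cmul z w) = Cnorm2 z * Cnorm2 w.
Proof. unfold Cnorm2, Cmul, Cre, Cim; simpl; ring. Qed.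

Lemma Cnorm2_Crscal a z : Cnorm2 (Crscal a z) = a * a * Cnorm2 z.
Proof. unfold Cnorm2, Crscal, Cre, Cim; simpl; ring. Qed.

Lemma Cnorm2_Cexp z : Cnorm2 (Cexp z) = exp (Cre z) * exp (Cre z).
Proof.
  unfold Cnorm2, Cexp, Cre, Cim; simpl.
  pose proof (sin2_cos2 (snd z)) as Hsc; unfold Rsqr in Hsc.
  transitivity (exp (fst z) * exp (fst z) * (sin (snd z) * sin (snd z) + cos (snd z) * cos (snd z)));
    [ring | rewrite Hsc; ring].
Qed.

Lemma Cexp_add a b : Cmul (Cexp a) (Cexp b) = Cexp (Cadd a b).
Proof. unfold Cmul, Cexp, Cadd; simpl; rewrite exp_plus, cos_plus, sin_plus; f_equal; ring. Qed.

Lemma Cpow_Cexp a m : Cpow (Cexp a) m = Cexp (Crscal (INR m) a).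
Proof.
  induction m as [|m IH]; simpl Cpow.
  - unfold Cexp, Crscal; simpl; rewrite !Rmult_0_l, exp_0, cos_0, sin_0; unfold C1; f_equal; ring.
  - rewrite IH, Cexp_add; f_equal; unfold Cadd, Crscal; rewrite S_INR; simpl; f_equal; ring.
Qed.

Lemma Cpow_C1 p : Cpow C1 p = C1.
Proof. induction p as [|p IH]; simpl; [easy |]; rewrite IH; unfold Cmul, C1; simpl; f_equal; ring. Qed.

Lemma exp_le_exp_of_le a b : a <= b -> exp a <= exp b.
Proof. intros [Hlt | ->]; [left; apply exp_increasing |]; lra. Qed.

Lemma exp_sub1_sq_le a : -1/2 <= a <= 1/2 -> (exp a - 1) * (exp a - 1) <= 4 * (a * a) /\ exp a <= 2.
Proof.
  intros Ha; pose proof (exp_ineq1_le a) as Hlb.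
  destruct (Rle_dec 0 a) as [Hpos | Hneg].
  - (* [exp a * exp (-a) = 1] and [exp (-a) >= 1 - a] give [exp a <= 1 + 2 a] *)
    pose proof (exp_ineq1_le (- a)) as Hlb'.
    assert (Hinv : exp a * exp (- a) = 1) by (rewrite <- exp_plus, Rplus_opp_r; apply exp_0).
    pose proof (exp_pos a); assert (exp a <= 1 + 2 * a) by nra; split; nra.
  - assert (exp a <= 1) by (rewrite <- exp_0; apply exp_le_exp_of_le; lra); split; nra.
Qed.

Lemma cos_ge_1_sub_sq_half y : -2 <= y <= 2 -> 1 - y * y / 2 <= cos y.
Proof.
  intros [Hl Hu]; destruct (pre_cos_bound y 0 Hl Hu) as [H _].
  unfold cos_approx, cos_term in H; simpl in H; lra.
Qed.

Lemma Cnorm2_Cexp_sub1 u : Cnorm2 u <= 1/4 -> Cnorm2 (Cadd (Cexp u) (-1, 0)) <= 4 * Cnorm2 u.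
Proof.
  destruct u as [a b]; unfold Cnorm2, Cadd, Cexp, Cre, Cim; simpl; intros Hu.
  destruct (exp_sub1_sq_le a) as [Hexp Hexp2]; [nra |].
  pose proof (cos_ge_1_sub_sq_half b ltac:(nra)) as Hcos.
  pose proof (sin2_cos2 b) as Hsc; unfold Rsqr in Hsc; pose proof (exp_pos a).
  replace ((exp a * cos b + -1) * (exp a * cos b + -1) + (exp a * sin b + 0) * (exp a * sin b + 0))
    with (exp a * exp a * (sin b * sin b + cos b * cos b) - 2 * exp a * cos b + 1) by ring.
  rewrite Hsc; assert (exp a * (1 - b * b / 2) <= exp a * cos b) by (apply Rmult_le_compat_l; lra).
  nra.
Qed.

Lemma Csum_add f g N : Csum (fun i => Cadd (f i) (g i)) N = Cadd (Csum f N) (Csum g N).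
Proof. induction N as [|N IH]; simpl; [easy |]; rewrite IH; unfold Cadd; simpl; f_equal; ring. Qed.

Lemma Csum_eq_C0 f N : (forall j, (j <= N)%nat -> f j = C0) -> Csum f N = C0.
Proof.
  induction N as [|N IH]; intros Hf; simpl; [apply Hf; lia |].
  rewrite IH, (Hf (S N)) by (lia || intros; apply Hf; lia); unfold Cadd, C0; simpl; f_equal; ring.
Qed.

Lemma Csum_single f m N : (m <= N)%nat -> (forall j, j <> m -> f j = C0) -> Csum f N = f m.
Proof.
  intros Hm Hf; induction N as [|N IH]; simpl.
  - now replace m with 0%nat by lia.
  - destruct (Nat.eq_dec m (S N)) as [-> | Hne].
    + rewrite Csum_eq_C0 by (intros; apply Hf; lia); destruct (f (S N)); unfold Cadd, C0; simpl; f_equal; ring.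
    + rewrite IH, (Hf (S N)) by (auto || lia); destruct (f m); unfold Cadd, C0; simpl; f_equal; ring.
Qed.

Definition monomial (a : C) (i0 j0 i j : nat) : C :=
  if andb (i =? i0) (j =? j0) then a else C0.

Lemma poly_eval2_monomial n a i0 j0 z w : (i0 + j0 <= n)%nat ->
  poly_eval2 n (monomial a i0 j0) z w = Cmul a (Cmul (Cpow z i0) (Cpow w j0)).
Proof.
  intros Hdeg; unfold poly_eval2, monomial.
  assert (Hzero : forall x, Cmul C0 x = C0) by (intros; unfold Cmul, C0; simpl; f_equal; ring).
  rewrite (Csum_single _ i0) by
    (lia || intros i Hi; apply Csum_eq_C0; intros j _; rewrite (proj2 (Nat.eqb_neq i i0) Hi); apply Hzero).
  rewrite (Csum_single _ j0) by
    (lia || intros j Hj; rewrite Nat.eqb_refl, (proj2 (Nat.eqb_neq j j0) Hj); apply Hzero).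
  now rewrite !Nat.eqb_refl.
Qed.

Lemma poly_eval2_add n c1 c2 z w :
  poly_eval2 n (fun i j => Cadd (c1 i j) (c2 i j)) z w = Cadd (poly_eval2 n c1 z w) (poly_eval2 n c2 z w).
Proof.
  unfold poly_eval2; rewrite <- Csum_add; f_equal; apply functional_extensionality; intros i.
  rewrite <- Csum_add; f_equal; apply functional_extensionality; intros j.
  unfold Cadd, Cmul; simpl; f_equal; ring.
Qed.

Definition binomial_coef (s : R) (k p : nat) (i j : nat) : C :=
  Cadd (monomial (s, 0) 0 k i j) (monomial (- s, 0) p 0 i j).

Lemma poly_eval2_binomial n s k p z w : (k <= n)%nat -> (p <= n)%nat ->
  poly_eval2 n (binomial_coef s k p) z w = Crscal s (Cadd (Cpow w k) (Crscal (-1) (Cpow z p))).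
Proof.
  intros Hk Hp; unfold binomial_coef; rewrite poly_eval2_add, !poly_eval2_monomial by lia.
  simpl Cpow; destruct (Cpow w k), (Cpow z p).
  unfold Cadd, Cmul, Crscal, C1; simpl; f_equal; ring.
Qed.

Lemma binomial_on_K n s k p alpha z : (k <= n)%nat -> (p <= n)%nat ->
  poly_eval2 n (binomial_coef s k p) (Cexp z) (Cexp (Crscal alpha z)) =
  Crscal s (Cmul (Cexp (Crscal (INR p) z)) (Cadd (Cexp (Crscal (INR k * alpha - INR p) z)) (-1, 0))).
Proof.
  intros Hk Hp; rewrite poly_eval2_binomial, !Cpow_Cexp by assumption.
  replace (Crscal (INR k) (Crscal alpha z)) with (Cadd (Crscal (INR p) z) (Crscal (INR k * alpha - INR p) z))
    by (unfold Cadd, Crscal; simpl; f_equal; ring).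
  rewrite <- Cexp_add; destruct (Cexp (Crscal (INR p) z)), (Cexp (Crscal (INR k * alpha - INR p) z)).
  unfold Cadd, Cmul, Crscal; simpl; f_equal; ring.
Qed.

Lemma binomial_normK_le1 alpha n s k p : (k <= n)%nat -> (p <= n)%nat -> 0 <= s ->
  Rabs (INR k * alpha - INR p) <= 1/2 ->
  2 * s * exp (INR n) * Rabs (INR k * alpha - INR p) <= 1 ->
  normK_le1 alpha n (binomial_coef s k p).
Proof.
  intros Hk Hp Hs Ht Hst z Hz; rewrite Cmod_le_1_iff in *; rewrite binomial_on_K by assumption.
  rewrite Cnorm2_Crscal, Cnorm2_Cmul, Cnorm2_Cexp.
  set (t := INR k * alpha - INR p) in *.
  assert (Htt : t * t = Rabs t * Rabs t) by (rewrite <- Rabs_mult, Rabs_pos_eq; nra).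
  pose proof (Cnorm2_ge0 z) as Hz0; pose proof (Rabs_pos t).
  assert (t * t <= 1/4) by nra.
  assert (Hsmall : Cnorm2 (Crscal t z) <= 1/4) by (rewrite Cnorm2_Crscal; nra).
  pose proof (Cnorm2_Cexp_sub1 _ Hsmall) as Hdiff; rewrite Cnorm2_Crscal in Hdiff.
  pose proof (Cnorm2_ge0 (Cadd (Cexp (Crscal t z)) (-1, 0))).
  set (B := Cnorm2 (Cadd (Cexp (Crscal t z)) (-1, 0))) in *.
  assert (HB : B <= 4 * (Rabs t * Rabs t)) by nra.
  assert (Hre : Cre (Crscal (INR p) z) <= INR n).
  { assert (Cre z <= 1) by (unfold Cnorm2 in Hz; nra).
    pose proof (pos_INR p); assert (INR p <= INR n) by (apply le_INR; lia).
    unfold Crscal, Cre in *; simpl; nra. }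
  pose proof (exp_le_exp_of_le _ _ Hre) as HA; pose proof (exp_pos (Cre (Crscal (INR p) z))).
  set (A := exp (Cre (Crscal (INR p) z))) in *.
  assert (A * A * B <= exp (INR n) * exp (INR n) * (4 * (Rabs t * Rabs t)))
    by (apply Rmult_le_compat; nra).
  pose proof (exp_pos (INR n)).
  assert (0 <= 2 * s * exp (INR n) * Rabs t) by (apply Rmult_le_pos; [nra | lra]).
  nra.
Qed.

Lemma in_bidisk_C1_C0 : in_bidisk C1 C0.
Proof.
  split; apply Cmod_le_1_iff; unfold Cnorm2, C1, C0, Cre, Cim; simpl; lra.
Qed.

Lemma Cmod_binomial_at_C1_C0 n s k p : (1 <= k <= n)%nat -> (p <= n)%nat -> 0 <= s ->
  Cmod (poly_eval2 n (binomial_coef s k p) C1 C0) = s.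
Proof.
  intros Hk Hp Hs; rewrite poly_eval2_binomial, Cpow_C1 by lia.
  destruct k as [|k]; [lia |]; simpl Cpow.
  unfold Cmod, Cadd, Cmul, Crscal, C1, C0; simpl.
  replace (_ * _ + _ * _) with (s * s) by ring; apply sqrt_square, Hs.
Qed.

Lemma binomial_in_En_set alpha n s k p : (1 <= k <= n)%nat -> (p <= n)%nat -> 0 <= s ->
  Rabs (INR k * alpha - INR p) <= 1/2 ->
  2 * s * exp (INR n) * Rabs (INR k * alpha - INR p) <= 1 ->
  En_set alpha n s.
Proof.
  intros Hk Hp Hs Ht Hst; exists (binomial_coef s k p), C1, C0.
  split; [apply binomial_normK_le1; auto; lia |].
  split; [exact in_bidisk_C1_C0 |].
  symmetry; apply Cmod_binomial_at_C1_C0; assumption.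
Qed.

(* Test the extremal property of [E] on [s (w^k - z^p)] with [s = 1 / (2 e^n d)]. *)
Lemma dist_ge_inv_En alpha n k p E : (1 <= k <= n)%nat -> (p <= n)%nat ->
  0 < Rabs (INR k * alpha - INR p) <= 1/2 -> is_lub (En_set alpha n) E ->
  Rabs (INR k * alpha - INR p) >= / (2 * exp (INR n) * E).
Proof.
  intros Hk Hp [Hd0 Hd] [HEub _].
  set (d := Rabs (INR k * alpha - INR p)) in *.
  pose proof (exp_pos (INR n)).
  set (s := / (2 * exp (INR n) * d)).
  assert (Hs : 0 < s) by (apply Rinv_0_lt_compat; nra).
  assert (Hsd : 2 * s * exp (INR n) * d = 1) by (unfold s; field; lra).
  assert (HsE : s <= E)
    by (apply HEub, (binomial_in_En_set alpha n s k p); first [assumption | fold d; lra]).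
  assert (1 <= 2 * exp (INR n) * E * d) by nra.
  apply Rle_ge, (Rmult_le_reg_l (2 * exp (INR n) * E)); [nra |].
  rewrite Rinv_r by nra; lra.
Qed.

Lemma distZ_nearest_nat x : 0 <= x ->
  exists p : nat, distZ x = Rabs (x - INR p) /\ Rabs (x - INR p) <= 1/2.
Proof.
  intros Hx; unfold distZ; set (f := Int_part x).
  destruct (base_Int_part x) as [Hf1 Hf2]; fold f in Hf1, Hf2.
  assert (Hf0 : (0 <= f)%Z) by (assert (-1 < f)%Z by (apply lt_IZR; lra); lia).
  assert (HINR : forall m, (0 <= m)%Z -> IZR m = INR (Z.to_nat m))
    by (intros m Hm; rewrite INR_IZR_INZ, Z2Nat.id; auto).
  unfold Rmin; destruct (Rle_dec (x - IZR f) (IZR f + 1 - x)).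
  - exists (Z.to_nat f); rewrite <- HINR, Rabs_right by (lia || lra); lra.
  - exists (Z.to_nat (f + 1)); rewrite <- HINR, plus_IZR, Rabs_left by (lia || lra); lra.
Qed.

Lemma irrational_mul_nat_neq alpha k p : irrational alpha -> (1 <= k)%nat -> INR k * alpha <> INR p.
Proof.
  intros Hirr Hk Heq; apply Hirr; exists (Z.of_nat p), (Z.of_nat k); split; [lia |].
  rewrite <- !INR_IZR_INZ, <- Heq; field; apply not_0_INR; lia.
Qed.

Theorem corollary1 (alpha : R) (Ha0 : 0 < alpha) (Ha1 : alpha < 1)
  (Hirr : irrational alpha) (n : nat) (Hn : (1 <= n)%nat) (E : R)
  (HE : is_lub (En_set alpha n) E) :
  forall k : nat, (1 <= k <= n)%nat ->
    distZ (INR k * alpha) >= / (2 * exp (INR n) * E).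
Proof.
  intros k Hk.
  assert (Hk1 : 1 <= INR k) by (apply (le_INR 1); lia).
  destruct (distZ_nearest_nat (INR k * alpha)) as [p [-> Hp]]; [nra |].
  assert (Hpk : (p <= k)%nat).
  { rewrite Rabs_minus_sym in Hp; pose proof (Rle_abs (INR p - INR k * alpha)).
    apply Nat.lt_succ_r, INR_lt; rewrite S_INR; nra. }
  apply (dist_ge_inv_En alpha n k p E); [assumption | lia | split; [| assumption] | assumption].
  apply Rabs_pos_lt, Rminus_eq_contra, irrational_mul_nat_neq; [assumption | lia].
Qed.
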